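(* Let $J\subseteq[t_i,t_{i+1}]$ be an elementary interval, and (after replacing each $\sigma(t)$ by $\sigma(t)-\mathcal{I}(t)$) assume $\mathcal{I}\equiv 0$ on $J$, so the entities move along $n$ non-horizontal lines in the $(t,y)$-plane forming an arrangement $\mathcal{A}$. If $(t,\sigma,\psi)$ with $t\in J$ is a break point of type (ii) of some lower envelope $L_j$, then the points $(t,\sigma(t))$ and $(t,\psi(t))$ lie on the boundary $\partial\mathcal{Z}$ of the zone $\mathcal{Z}$ of the line $y=0$ in $\mathcal{A}$.
   Context: Entities of a set $\mathcal{X}$ of size $n$ move in $\mathbb{R}^1$ along piecewise-linear trajectories with vertices at common times $t_0<\dots<t_\tau$; $\varepsilon>0$ is fixed; trajectories are in general position (no three meet at one point at the same time, no two pairs are at distance exactly $\varepsilon$ at the same time). $\mathcal{I}(t)=(\max_\sigma\sigma(t)+\min_\sigma\sigma(t))/2$; an elementary interval is a maximal subinterval of some $[t_i,t_{i+1}]$ on which $\mathcal{I}$ is linear. Two entities are $\varepsilon$-connected at time $t$ if they are joined by a chain of entities with consecutive distances at most $\varepsilon$ at time $t$. At each time, $\mathcal{X}$ is partitioned into $\varepsilon$-connectivity classes; let $(\mathcal{X}_1,J_1),\dots,(\mathcal{X}_m,J_m)$ be all pairs where $J_j$ is a maximal time interval during which $\mathcal{X}_j$ is one of these classes at every time. Let $f_\sigma(t)=|\sigma(t)-\mathcal{I}(t)|$ and $L_j$ the lower envelope of $\{f_\sigma:\sigma\in\mathcal{X}_j\}$ restricted to $J_j$. A break point of $L_j$ is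 a triple $(t,\sigma,\psi)$, $\sigma\neq\psi\in\mathcal{X}_j$, $t\in J_j$, with $L_j(t)=f_\sigma(t)=f_\psi(t)$; it is of type (i) if $\sigma(t)=\psi(t)$ and of type (ii) if $\sigma(t)-\mathcal{I}(t)=-(\psi(t)-\mathcal{I}(t))\neq 0$. The zone of a line in an arrangement is the set of faces intersected by the line together with their boundary edges. *)

From Stdlib Require Import Reals Lra List Relations.
Open Scope R_scope.

Definition ent (n k : nat) : Prop := (k < n)%nat.

Definition maxpos (n : nat) (pos : nat -> R -> R) (t : R) : R :=
  fold_right Rmax (pos 0%nat t) (map (fun k => pos k t) (seq 0 n)).
Definition minpos (n : nat) (pos : nat -> R -> R) (t : R) : R :=
  fold_right Rmin (pos 0%nat t) (map (fun k => pos k t) (seq 0 n)).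

Definition Imid (n : nat) (pos : nat -> R -> R) (t : R) : R :=
  (maxpos n pos t + minpos n pos t) / 2.

Definition Dom (tau : nat) (tt : nat -> R) (t : R) : Prop :=
  tt 0%nat <= t <= tt tau.

Definition times_increasing (tau : nat) (tt : nat -> R) : Prop :=
  forall i, (i < tau)%nat -> tt i < tt (S i).

Definition piecewise_linear (n tau : nat) (tt : nat -> R) (pos : nat -> R -> R) : Prop :=
  forall k, ent n k -> forall i, (i < tau)%nat ->
    exists c d, forall t, tt i <= t <= tt (S i) -> pos k t = c * t + d.

Definition general_position (n tau : nat) (tt : nat -> R) (eps : R)
  (pos : nat -> R -> R) : Prop :=
  (forall t, Dom tau tt t -> forall s p q, ent n s -> ent n p -> ent n q ->
     s <> p -> p <> q -> s <> q ->
     ~ (pos s t = pos p t /\ pos p t = pos q t)) /\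
  (forall t, Dom tau tt t -> forall s p q r, ent n s -> ent n p -> ent n q -> ent n r ->
     s <> p -> q <> r -> ~ ((s = q /\ p = r) \/ (s = r /\ p = q)) ->
     ~ (Rabs (pos s t - pos p t) = eps /\ Rabs (pos q t - pos r t) = eps)).

Definition linear_on (F : R -> R) (lo hi : R) : Prop :=
  exists c d, forall t, lo <= t <= hi -> F t = c * t + d.

Definition elementary_interval (n tau : nat) (tt : nat -> R) (pos : nat -> R -> R)
  (i : nat) (ja jb : R) : Prop :=
  (i < tau)%nat /\ tt i <= ja <= jb /\ jb <= tt (S i) /\
  linear_on (Imid n pos) ja jb /\
  forall ja' jb', tt i <= ja' <= ja -> jb <= jb' <= tt (S i) ->
    linear_on (Imid n pos) ja' jb' -> ja' = ja /\ jb' = jb.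

Definition eps_close (n : nat) (eps : R) (pos : nat -> R -> R) (t : R) (s p : nat) : Prop :=
  ent n s /\ ent n p /\ Rabs (pos s t - pos p t) <= eps.

Definition eps_connected (n : nat) (eps : R) (pos : nat -> R -> R) (t : R) (s p : nat) : Prop :=
  ent n s /\ ent n p /\ clos_refl_trans nat (eps_close n eps pos t) s p.

Definition is_class (n : nat) (eps : R) (pos : nat -> R -> R) (X : nat -> Prop) (t : R) : Prop :=
  (exists s, X s) /\ (forall s, X s -> ent n s) /\
  (forall s p, X s -> (X p <-> eps_connected n eps pos t s p)).

Definition is_time_interval (S : R -> Prop) : Prop :=
  forall x y z, S x -> S z -> x <= y <= z -> S y.

(* (X, Jj) is one of the pairs (X_j, J_j): Jj is a maximal time interval
   during which X is a connectivity class at every time *)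
Definition class_pair (n tau : nat) (tt : nat -> R) (eps : R) (pos : nat -> R -> R)
  (X : nat -> Prop) (Jj : R -> Prop) : Prop :=
  is_time_interval Jj /\ (exists t, Jj t) /\
  (forall t, Jj t -> Dom tau tt t /\ is_class n eps pos X t) /\
  (forall J', is_time_interval J' -> (forall t, Jj t -> J' t) ->
     (forall t, J' t -> Dom tau tt t /\ is_class n eps pos X t) ->
     forall t, J' t -> Jj t).

Definition fdist (n : nat) (pos : nat -> R -> R) (s : nat) (t : R) : R :=
  Rabs (pos s t - Imid n pos t).

Definition lower_env_val (n : nat) (pos : nat -> R -> R) (X : nat -> Prop) (t v : R) : Prop :=
  (exists s, X s /\ fdist n pos s t = v) /\ (forall s, X s -> v <= fdist n pos s t).

Definition break_point (n : nat) (pos : nat -> R -> R) (X : nat -> Prop) (Jj : R -> Prop)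
  (t : R) (s p : nat) : Prop :=
  s <> p /\ X s /\ X p /\ Jj t /\
  lower_env_val n pos X t (fdist n pos s t) /\ fdist n pos s t = fdist n pos p t.

Definition break_type_ii (n : nat) (pos : nat -> R -> R) (t : R) (s p : nat) : Prop :=
  pos s t - Imid n pos t = - (pos p t - Imid n pos t) /\ pos s t - Imid n pos t <> 0.

(* The arrangement of the n lines y = a k * t + b k in the (t,y)-plane. *)
Definition lineval (a b : nat -> R) (k : nat) (q : R * R) : R :=
  snd q - (a k * fst q + b k).

(* 2-dimensional faces: nonempty cells with a fixed (nonzero) sign vector *)
Definition face (n : nat) (a b : nat -> R) (F : R * R -> Prop) : Prop :=
  (exists sg : nat -> bool, forall q, F q <->
     (forall k, ent n k -> if sg k then 0 < lineval a b k q else lineval a b k q < 0))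
  /\ (exists q, F q).

Definition zone_face (n : nat) (a b : nat -> R) (F : R * R -> Prop) : Prop :=
  face n a b F /\ exists t, F (t, 0).

Definition closure (F : R * R -> Prop) (q : R * R) : Prop :=
  forall d, 0 < d -> exists r, F r /\ Rabs (fst r - fst q) < d /\ Rabs (snd r - snd q) < d.

Definition on_zone_boundary (n : nat) (a b : nat -> R) (q : R * R) : Prop :=
  exists F, zone_face n a b F /\ closure F q /\ ~ F q.

(* At time t with I(t) = 0, a type (ii) break point of L_j is a pair s, p of
   entities of the class X_j at heights y and -y, where y = |s(t)| > 0 is the
   smallest distance to 0 inside the class.  Any entity k strictly between them
   belongs to the class too: an eps-chain inside the class from s down to p has
   to jump over k's height with a single step of length <= eps, and k is then
   eps-close to an endpoint of that step.  Hence no line of the arrangement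
   meets the open vertical segment {t} x (-y, y).  That segment lies in one face
   of the arrangement, which meets y = 0 and so belongs to the zone, and its
   endpoints (t, s(t)) and (t, p(t)) lie in the closure of that face but on a
   line, hence on the boundary of the zone. *)

From Stdlib Require Import Reals Lra List Relations.
Open Scope R_scope.

Lemma clos_rt_crossing (A : Type) (Rel : A -> A -> Prop) (f : A -> R) (x : R) (u v : A) :
  clos_refl_trans A Rel u v -> x < f u -> f v < x ->
  exists w w', clos_refl_trans A Rel u w /\ Rel w w' /\ x < f w /\ f w' <= x.
Proof.
  intros Huv; apply clos_rt_rt1n in Huv.
  induction Huv as [u | u u' v Huu' _ IH]; intros Hu Hv; [lra |].
  destruct (Rle_dec (f u') x) as [Hle | Hgt].
  - exists u, u'; repeat split; auto using rt_refl.
  - destruct (IH ltac:(lra) Hv) as (w & w' & Hu'w & Hww' & Hw & Hw').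
    exists w, w'; repeat split; auto.
    apply rt_trans with u'; auto using rt_step.
Qed.

Lemma class_contains_between n eps pos X t s p k :
  is_class n eps pos X t -> X s -> X p -> ent n k ->
  pos p t < pos k t < pos s t -> X k.
Proof.
  intros (_ & HXent & HXconn) Hs Hp Hk Hbetween.
  destruct (proj1 (HXconn s p Hs) Hp) as (_ & _ & Hsp).
  destruct (clos_rt_crossing _ (eps_close n eps pos t) (fun j => pos j t) (pos k t) s p
              Hsp ltac:(lra) ltac:(lra))
    as (w & w' & Hsw & (Hw & _ & Hww') & Hkw & Hw'k).
  apply (proj2 (HXconn s k Hs)); repeat split; auto.
  apply rt_trans with w; auto.
  apply rt_step; repeat split; auto.
  pose proof (Rle_abs (pos w t - pos w' t)).
  rewrite Rabs_right; lra.
Qed.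

Lemma type_ii_pair_min_abs n eps pos X t s p :
  is_class n eps pos X t -> X s -> X p -> pos p t = - pos s t ->
  (forall k, X k -> Rabs (pos s t) <= Rabs (pos k t)) ->
  forall k, ent n k -> Rabs (pos s t) <= Rabs (pos k t).
Proof.
  intros Hclass Hs Hp Hps Hmin k Hk.
  destruct (Rle_lt_dec (Rabs (pos s t)) (Rabs (pos k t))) as [| Hlt]; auto.
  apply Hmin.
  apply Rabs_def2 in Hlt.
  destruct (Rle_lt_dec 0 (pos s t)).
  - rewrite Rabs_right in Hlt by lra.
    apply (class_contains_between n eps pos X t s p k); auto; lra.
  - rewrite Rabs_left in Hlt by lra.
    apply (class_contains_between n eps pos X t p s k); auto; lra.
Qed.

Section VerticalGap.

Variables (n : nat) (a b : nat -> R) (t y0 : R).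
Hypothesis y0_pos : 0 < y0.
Hypothesis lines_avoid_gap : forall k, ent n k -> y0 <= Rabs (a k * t + b k).

Definition gap_sign (k : nat) : bool :=
  if Rlt_dec 0 (lineval a b k (t, 0)) then true else false.

Definition gap_face (q : R * R) : Prop :=
  forall k, ent n k -> if gap_sign k then 0 < lineval a b k q else lineval a b k q < 0.

Lemma gap_in_gap_face z : Rabs z < y0 -> gap_face (t, z).
Proof.
  intros Hz k Hk; specialize (lines_avoid_gap k Hk).
  apply Rabs_def2 in Hz.
  unfold gap_sign, lineval in *; simpl in *.
  destruct (Rlt_dec 0 (0 - (a k * t + b k))).
  - rewrite Rabs_left in lines_avoid_gap by lra; lra.
  - rewrite Rabs_right in lines_avoid_gap by lra; lra.
Qed.

Lemma gap_face_zone_face : zone_face n a b gap_face.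
Proof.
  assert (H0 : gap_face (t, 0)) by (apply gap_in_gap_face; rewrite Rabs_R0; lra).
  split; [split |]; eauto.
  exists gap_sign; reflexivity.
Qed.

Lemma gap_endpoint_on_zone_boundary m :
  ent n m -> Rabs (a m * t + b m) = y0 -> on_zone_boundary n a b (t, a m * t + b m).
Proof.
  intros Hm Hc; exists gap_face; split; [apply gap_face_zone_face | split].
  - intros d Hd.
    set (c := a m * t + b m) in *.
    set (h := Rmin (d / 2) y0).
    assert (0 < h) by (apply Rmin_glb_lt; lra).
    assert (h <= y0) by apply Rmin_r.
    assert (h <= d / 2) by apply Rmin_l.
    (* step from the endpoint towards 0 along the vertical line *)
    exists (t, c - h * (c / y0)); simpl.
    assert (Hsgn : Rabs (c / y0) = 1)
      by (unfold Rdiv; rewrite Rabs_mult, Rabs_inv, Hc, (Rabs_right y0) by lra; field; lra).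
    assert (Hcc : c = (c / y0) * y0) by (field; lra).
    repeat split.
    + apply gap_in_gap_face.
      rewrite Hcc at 1.
      replace (c / y0 * y0 - h * (c / y0)) with ((c / y0) * (y0 - h)) by ring.
      rewrite Rabs_mult, Hsgn, Rabs_right; lra.
    + unfold Rminus; rewrite Rplus_opp_r, Rabs_R0; lra.
    + replace (c - h * (c / y0) - c) with (- (h * (c / y0))) by ring.
      rewrite Rabs_Ropp, Rabs_mult, Hsgn, Rabs_right; lra.
  - intros Hface; specialize (Hface m Hm).
    unfold lineval in Hface; simpl in Hface.
    rewrite Rminus_diag in Hface; destruct (gap_sign m); lra.
Qed.

End VerticalGap.

Theorem mainTheorem4 :
  forall (n tau : nat) (tt : nat -> R) (eps : R) (pos : nat -> R -> R)
         (i : nat) (ja jb : R) (a b : nat -> R)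
         (X : nat -> Prop) (Jj : R -> Prop) (t : R) (s p : nat),
    0 < eps ->
    times_increasing tau tt ->
    piecewise_linear n tau tt pos ->
    general_position n tau tt eps pos ->
    elementary_interval n tau tt pos i ja jb ->
    (forall u, ja <= u <= jb -> Imid n pos u = 0) ->
    (forall k, ent n k -> forall u, ja <= u <= jb -> pos k u = a k * u + b k) ->
    class_pair n tau tt eps pos X Jj ->
    ja <= t <= jb ->
    break_point n pos X Jj t s p ->
    break_type_ii n pos t s p ->
    on_zone_boundary n a b (t, pos s t) /\ on_zone_boundary n a b (t, pos p t).
Proof.
  intros n tau tt eps pos i ja jb a b X Jj t s p _ _ _ _ _ HI Hlin (_ & _ & Hclasses & _) Ht
    (_ & Hs & Hp & HJ & (_ & Hlow) & _) (Hps & Hs0).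
  destruct (Hclasses t HJ) as [_ Hclass].
  pose proof Hclass as (_ & HXent & _).
  unfold fdist in Hlow; rewrite HI in Hlow, Hps, Hs0 by exact Ht.
  rewrite !Rminus_0_r in Hps, Hs0; setoid_rewrite Rminus_0_r in Hlow.
  assert (Hps' : pos p t = - pos s t) by lra.
  pose proof (type_ii_pair_min_abs n eps pos X t s p Hclass Hs Hp Hps' Hlow) as Hmin.
  assert (Hgap : forall k, ent n k -> Rabs (pos s t) <= Rabs (a k * t + b k)).
  { intros k Hk; rewrite <- (Hlin k Hk t Ht); auto. }
  rewrite (Hlin s (HXent s Hs) t Ht), (Hlin p (HXent p Hp) t Ht).
  split; apply (gap_endpoint_on_zone_boundary n a b t (Rabs (pos s t)));
    auto using Rabs_pos_lt.
  - rewrite <- (Hlin s (HXent s Hs) t Ht); reflexivity.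
  - rewrite <- (Hlin p (HXent p Hp) t Ht), Hps', Rabs_Ropp; reflexivity.
Qed.
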